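(* Let $a,b,c$ be positive integers that are not all equal, and let $n=a+b+c$. Let $A=\{1,\dots,a\}$, $B=\{a+1,\dots,a+b\}$ and $C=\{a+b+1,\dots,n\}$. Define the $n\times n$ array $M=(M_{i,j})_{i,j\in[n]}$ of subsets of $[n]$ by \[ M_{i,j}=\begin{cases} A&\text{if } i\in A \text{ and } j\in A,\\ B&\text{if } i\in B \text{ and } j\in B,\\ C&\text{if } i\in C \text{ and } j\in C,\\ \emptyset&\text{otherwise}. \end{cases} \] Let $k\ge 1$ and let $N=(N_{i,j})_{i,j\in[n]}$ be any $(n^2,k)$-array. Then there exist $i,j\in[n]$ with $M_{i,j}\cap N_{i,j}\neq\emptyset$.
   Context: $[n]=\{1,2,\dots,n\}$. For positive integers $n,d,k$, an $(n^d,k)$-array is a $d$-dimensional array of dimensions $n\times n\times\cdots\times n$ such that each entry is a subset of $[n]$ of cardinality exactly $k$, and every number in $[n]$ occurs in exactly $k$ of the entries along any axis-parallel line of the array (an axis-parallel line is the set of $n$ cells obtained by fixing all coordinates but one). In particular an $(n^2,k)$-array is an $n\times n$ array of $k$-subsets of $[n]$ in which each symbol of $[n]$ lies in exactly $k$ entries of each row and exactly $k$ entries of each column. *)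

From mathcomp Require Import all_boot.
Set Implicit Arguments. Unset Strict Implicit. Unset Printing Implicit Defensive.

(* Convention: [n] = {1,...,n} is represented by 'I_n, the element i : 'I_n
   standing for the number i+1.  Both cell coordinates and symbols use this. *)

Definition is_array2 (n k : nat) (N : 'I_n -> 'I_n -> {set 'I_n}) : Prop :=
  (forall i j, #|N i j| = k) /\
  (forall i (s : 'I_n), #|[set j | s \in N i j]| = k) /\
  (forall j (s : 'I_n), #|[set i | s \in N i j]| = k).

(* The block of [n] containing (i+1): 0 for A = {1..a}, 1 for B, 2 for C. *)
Definition block (a b : nat) (x : nat) : nat :=
  if x < a then 0 else if x < a + b then 1 else 2.

Definition block_set (a b c : nat) (t : nat) : {set 'I_(a + b + c)} :=
  [set x : 'I_(a + b + c) | block a b x == t].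

Definition Marr (a b c : nat) (i j : 'I_(a + b + c)) : {set 'I_(a + b + c)} :=
  if block a b i == block a b j then block_set a b c (block a b i) else set0.

From mathcomp Require Import all_boot zify.

(* Colour rows, columns and symbols by one map and suppose no cell whose row
   and column share a colour contains a symbol of that colour.  For a fixed
   symbol s, its occurrences in cells with equally coloured row and column, in
   columns of the colour of s, and in rows of the colour of s are then
   pairwise disjoint.  The last two families have k |class of s| members each
   (column and row conditions), and summed over s the first has k P members
   (cell condition), where P counts the equally coloured pairs of indices.
   Hence 3 k P <= k n^2.  For the blocks A, B, C, P = a^2 + b^2 + c^2, and
   3 (a^2 + b^2 + c^2) <= (a + b + c)^2 forces a = b = c. *)

Lemma sum_nat_of_bool_card (n : nat) (P : pred 'I_n) :
  \sum_(j < n) (P j : nat) = #|[set j | P j]|.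
Proof.
rewrite -sum1_card [RHS]big_mkcond /=; apply: eq_bigr => j _.
by rewrite inE; case: (P j).
Qed.

Lemma sum_eq_pairs_le1 (T : eqType) (x y z : T) :
  ~~ ((x == y) && (z == x)) -> (x == y) + (y == z) + (x == z) <= 1.
Proof.
case: (x =P y) => [<- /= zx | /eqP/negbTE xy _].
  by rewrite eq_sym (negbTE zx).
by rewrite add0n; case: (y =P z) => [<-|_]; rewrite ?xy ?leq_b1.
Qed.

Section AvoidingArray.

Variables (n k : nat) (T : eqType) (col : 'I_n -> T).
Variable N : 'I_n -> 'I_n -> {set 'I_n}.
Hypothesis arrayN : @is_array2 n k N.
Hypothesis avoidN :
  forall i j s, col i == col j -> col s == col i -> s \notin N i j.

Let class_size (t : T) := \sum_(i < n) (col i == t : nat).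

Lemma row_count i s : \sum_(j < n) (s \in N i j : nat) = k.
Proof. by rewrite sum_nat_of_bool_card (arrayN.2.1 i s). Qed.

Lemma column_count j s : \sum_(i < n) (s \in N i j : nat) = k.
Proof. by rewrite sum_nat_of_bool_card (arrayN.2.2 j s). Qed.

Lemma cell_count i j : \sum_(s < n) (s \in N i j : nat) = k.
Proof.
rewrite sum_nat_of_bool_card -(arrayN.1 i j).
by apply: eq_card => s; rewrite inE.
Qed.

Lemma symbol_count_bound s :
  \sum_(i < n) \sum_(j < n) ((col i == col j) * (s \in N i j))
  + k * class_size (col s) + k * class_size (col s) <= n * k.
Proof.
have in_columns : \sum_(i < n) \sum_(j < n) ((col j == col s) * (s \in N i j))
    = k * class_size (col s).
  rewrite exchange_big big_distrr /=; apply: eq_bigr => j _.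
  by rewrite -big_distrr /= column_count mulnC.
have in_rows : \sum_(i < n) \sum_(j < n) ((col i == col s) * (s \in N i j))
    = k * class_size (col s).
  rewrite big_distrr /=; apply: eq_bigr => i _.
  by rewrite -big_distrr /= row_count mulnC.
have total : \sum_(i < n) \sum_(j < n) (s \in N i j : nat) = n * k.
  rewrite (eq_bigr (fun=> k)) ?sum_nat_const ?card_ord // => i _.
  exact: row_count.
rewrite -total -{1}in_columns -in_rows -!big_split; apply: leq_sum => i _.
rewrite -!big_split; apply: leq_sum => j _.
case: (boolP (s \in N i j)) => [sN | _]; last by rewrite !muln0.
rewrite !muln1; apply: sum_eq_pairs_le1.
by apply: contraL sN => /andP [ij si]; apply: avoidN.
Qed.

Lemma avoiding_array_bound :
  k * (3 * \sum_(i < n) class_size (col i)) <= k * (n * n).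
Proof.
have same_colour_cells :
    \sum_(s < n) \sum_(i < n) \sum_(j < n) ((col i == col j) * (s \in N i j))
    = k * \sum_(i < n) class_size (col i).
  rewrite exchange_big big_distrr /=; apply: eq_bigr => i _.
  rewrite exchange_big big_distrr /=; apply: eq_bigr => j _.
  by rewrite -big_distrr /= cell_count mulnC eq_sym.
have := @leq_sum _ (index_enum 'I_n) xpredT _ _ (fun s _ => symbol_count_bound s).
rewrite !big_split /= same_colour_cells -big_distrr sum_nat_const card_ord /=.
by set P := \sum_(i < n) _; lia.
Qed.

End AvoidingArray.

Lemma sum_block (a b c : nat) (f : nat -> nat) :
  \sum_(i < a + b + c) f (block a b i) = a * f 0 + b * f 1 + c * f 2.
Proof.
rewrite -(big_mkord xpredT (fun i => f (block a b i))).
rewrite (@big_cat_nat _ _ _ (a + b)) /= ?leq_addr //.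
rewrite (@big_cat_nat _ _ _ a) /= ?leq_addr //.
rewrite (@eq_big_nat _ _ _ 0 a _ (fun=> f 0)); last first.
  by move=> i /andP [_ lt_ia]; rewrite /block lt_ia.
rewrite (@eq_big_nat _ _ _ a (a + b) _ (fun=> f 1)); last first.
  by move=> i /andP [le_ai lt_iab]; rewrite /block lt_iab ltnNge le_ai.
rewrite (@eq_big_nat _ _ _ (a + b) (a + b + c) _ (fun=> f 2)); last first.
  move=> i /andP [le_abi _]; have le_ai := leq_trans (leq_addr b a) le_abi.
  by rewrite /block ltnNge le_ai ltnNge le_abi.
by rewrite !sum_nat_const_nat subn0 !addKn.
Qed.

Lemma sum_block_class_size (a b c : nat) :
  \sum_(i < a + b + c) \sum_(j < a + b + c) (block a b j == block a b i : nat)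
  = a * a + b * b + c * c.
Proof.
pose class_size t := \sum_(j < a + b + c) (block a b j == t : nat).
rewrite (sum_block a b c class_size) /class_size.
by rewrite !(sum_block a b c (fun u => (u == _) : nat)) /=; lia.
Qed.

Lemma mem_Marr (a b c : nat) (i j s : 'I_(a + b + c)) :
  (s \in Marr i j) = (block a b i == block a b j) && (block a b s == block a b i).
Proof. by rewrite /Marr; case: eqP => _; rewrite ?inE. Qed.

Lemma eq_of_sum_sq_le (a b c : nat) :
  3 * (a * a + b * b + c * c) <= (a + b + c) * (a + b + c) -> a = b /\ b = c.
Proof.
move=> le_sq.
have [le_sums eq_sums] :=
  leqif_add (leqif_add (nat_Cauchy a b) (nat_Cauchy b c)) (nat_Cauchy c a).
have : (a == b) && (b == c) && (c == a).
  by rewrite -eq_sums eqn_leq le_sums /= !expnS !expn0 !muln1; nia.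
by case/andP=> /andP [/eqP -> /eqP ->].
Qed.

Theorem theorem1 (a b c k : nat) :
  0 < a -> 0 < b -> 0 < c -> ~ (a = b /\ b = c) -> 1 <= k ->
  forall N : 'I_(a + b + c) -> 'I_(a + b + c) -> {set 'I_(a + b + c)},
  @is_array2 (a + b + c) k N ->
  exists i j : 'I_(a + b + c), @Marr a b c i j :&: N i j != set0.
Proof.
move=> _ _ _ not_all_eq k_gt0 N arrayN.
pose meets (p : 'I_(a + b + c) * 'I_(a + b + c)) :=
  Marr p.1 p.2 :&: N p.1 p.2 != set0.
have [[i j] meet | avoid] := pickP meets; first by exists i, j.
have avoidN (i j s : 'I_(a + b + c)) :
    block a b i == block a b j -> block a b s == block a b i -> s \notin N i j.
  move=> ij si; apply/negP => sN; have /negbFE/eqP := avoid (i, j).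
  by move/setP/(_ s); rewrite !inE mem_Marr ij si sN.
have := @avoiding_array_bound _ _ _ _ _ arrayN avoidN.
rewrite sum_block_class_size leq_pmul2l // => le_sq.
by case: not_all_eq; apply: eq_of_sum_sq_le.
Qed.
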